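(* Let $R$ be a unital ring with involution and let $a,b\in R$ both be core invertible. Then $a\overset{\circledast}{\leq} b$ if and only if $a^{\circledast}b=b^{\circledast}a$, $ba^{\circledast}=ab^{\circledast}$ and $ab^{\circledast}a=a$.
   Context: $R$ is a ring with identity and an involution $x\mapsto x^{*}$. An element $a\in R$ is core invertible if there exists $x\in R$ with $axa=a$, $xR=aR$ and $Rx=Ra^{*}$; such $x$ is unique, called the core inverse of $a$ and denoted $a^{\circledast}$. For $a$ core invertible and $b\in R$, $a\overset{\circledast}{\leq} b$ means $a^{\circledast}a=a^{\circledast}b$ and $aa^{\circledast}=ba^{\circledast}$. *)

From HB Require Import structures.
From mathcomp Require Import all_boot all_algebra.
Set Implicit Arguments. Unset Strict Implicit. Unset Printing Implicit Defensive.
Import GRing.Theory.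
Local Open Scope ring_scope.

Definition ring_involution (R : pzRingType) (star : R -> R) : Prop :=
  (forall x y : R, star (x + y) = star x + star y) /\
  (forall x y : R, star (x * y) = star y * star x) /\
  (forall x : R, star (star x) = x).

Definition same_right_ideal (R : pzRingType) (x a : R) : Prop :=
  (exists r : R, x = a * r) /\ (exists s : R, a = x * s).

Definition same_left_ideal (R : pzRingType) (x y : R) : Prop :=
  (exists r : R, x = r * y) /\ (exists s : R, y = s * x).

Definition is_core_inverse (R : pzRingType) (star : R -> R) (a x : R) : Prop :=
  a * x * a = a /\ same_right_ideal x a /\ same_left_ideal x (star a).

(* a <=core b, with x the core inverse of a. *)
Definition core_le (R : pzRingType) (a x b : R) : Prop :=
  x * a = x * b /\ a * x = b * x.

(* From axa = a, xR = aR and Rx = Ra* one gets that a x is self-adjoint,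
   x a x = x, x a a = a and a x x = x.  If a <= b, then x lies in b R and
   a = a x b, so the core inverse y of b can be traded for x on either side
   (b y a x = a x = a x b y, y b x = x).  Conversely the three identities let
   a y stand in for b x and y a for x b. *)
From mathcomp Require Import all_boot all_algebra.
Local Open Scope ring_scope.
Import GRing.Theory.

Set Implicit Arguments.
Unset Strict Implicit.

Section CoreInverse.

Variables (R : pzRingType) (star : R -> R) (a x : R).
Hypotheses (Hstar : ring_involution star) (Hax : is_core_inverse star a x).

Lemma core_inverse_inner : a * x * a = a.
Proof. by case: Hax. Qed.

Lemma core_inverse_absorbr : a * x * x = x.
Proof.
have [_ [[[r xE] _] _]] := Hax.
by rewrite {2 3}xE !mulrA core_inverse_inner.
Qed.

Lemma core_inverse_mulr_star : x = x * star (a * x).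
Proof.
have [_ [sM _]] := Hstar.
have [_ [_ [[r xr] _]]] := Hax.
by rewrite {1}xr -{1}core_inverse_inner !sM !mulrA -xr.
Qed.

Lemma core_inverse_selfadjoint : star (a * x) = a * x.
Proof.
have [_ [sM sK]] := Hstar.
have axE : a * x = a * x * star (a * x).
  by rewrite -mulrA -core_inverse_mulr_star.
by rewrite {1}axE sM sK -axE.
Qed.

Lemma core_inverse_outer : x * a * x = x.
Proof.
by rewrite -mulrA -core_inverse_selfadjoint -core_inverse_mulr_star.
Qed.

Lemma core_inverse_absorbl : x * a * a = a.
Proof.
have [_ [[_ [s aE]] _]] := Hax.
by rewrite {2 3}aE !mulrA core_inverse_outer.
Qed.

Lemma core_le_of_identities (b y : R) :
  x * b = y * a -> b * x = a * y -> a * y * a = a -> core_le a x b.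
Proof.
move=> xbE bxE ayaE; split.
- rewrite -{1}ayaE -bxE !mulrA xbE -!mulrA [a * (x * a)]mulrA.
  by rewrite core_inverse_inner.
- by rewrite -{1}ayaE -bxE -!mulrA [x * (a * x)]mulrA core_inverse_outer.
Qed.

End CoreInverse.

Section CoreOrder.

Variables (R : pzRingType) (star : R -> R) (a b x y : R).
Hypotheses (Hstar : ring_involution star)
  (Hax : is_core_inverse star a x) (Hby : is_core_inverse star b y).

Lemma core_le_identities :
  core_le a x b -> [/\ x * b = y * a, b * x = a * y & a * y * a = a].
Proof.
move=> [xaE axE].
have [_ [sM _]] := Hstar.
have aE : a = b * x * a by rewrite -axE (core_inverse_inner Hax).
have ybx : y * b * x = x.
  rewrite -(core_inverse_absorbr Hax) axE !mulrA.
  by rewrite (core_inverse_absorbl Hstar Hby).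
have axbE : a = a * x * b by rewrite -mulrA -xaE mulrA (core_inverse_inner Hax).
have byax : a * x = b * y * (a * x).
  by rewrite axE mulrA (core_inverse_inner Hby).
have axby : a * x = a * x * (b * y).
  by rewrite -(core_inverse_selfadjoint Hstar Hax) {1}byax sM
    (core_inverse_selfadjoint Hstar Hax) (core_inverse_selfadjoint Hstar Hby).
have bxE : b * x = a * y by rewrite -axE axby {2}axbE !mulrA.
split=> //; last by rewrite -bxE -axE (core_inverse_inner Hax).
by rewrite -xaE {2}aE !mulrA ybx.
Qed.

End CoreOrder.

Theorem proposition2p8 (R : pzRingType) (star : R -> R)
    (Hstar : ring_involution star) (a b ac bc : R)
    (Ha : is_core_inverse star a ac) (Hb : is_core_inverse star b bc) :
  core_le a ac b <->
  (ac * b = bc * a /\ b * ac = a * bc /\ a * bc * a = a).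
Proof.
split.
- by move=> /(core_le_identities Hstar Ha Hb) [xbE bxE ayaE].
- by case=> xbE [bxE ayaE]; exact: (core_le_of_identities Hstar Ha xbE bxE).
Qed.
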